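(* Let $\Sigma,\Gamma$ be finite alphabets, each with at least two letters. Let $w,u\in\Sigma^{\mathbb{N}}$ be infinite words with $w = pu$ for some finite word $p\in\Sigma^*$. Then $\mathrm{ACE}_{\mathcal{I}}(w) = \mathrm{ACE}_{\mathcal{I}}(u)$.
   Context: $\mathrm{Fact}_n(w)$ is the set of length-$n$ factors of $w$. For a nonempty word $v$ and integer $p\ge0$, $v^{p/|v|}$ is the prefix of length $p$ of $vvv\cdots$. For a nonempty finite word $u$, $\mathrm{E}(u) = \sup\{ r \in \mathbb{Q} : u = v^r \text{ for some nonempty } v\}$. For an infinite word $w$, $\mathrm{ACE}(w) = \limsup_{n\to\infty}\sup\{\mathrm{E}(u) : u\in\mathrm{Fact}_n(w)\}$. $\mathcal{I}$ is the set of injective morphisms $\Sigma^*\to\Gamma^*$ and $\mathrm{ACE}_{\mathcal{I}}(w) = \sup\{\mathrm{ACE}(h(w)) : h\in\mathcal{I}\}$. *)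

From HB Require Import structures.
From mathcomp Require Import all_boot all_order all_algebra.
From mathcomp Require Import all_classical all_reals all_analysis.
Set Implicit Arguments. Unset Strict Implicit. Unset Printing Implicit Defensive.
Import Order.TTheory GRing.Theory Num.Theory.
Local Open Scope classical_set_scope.
Local Open Scope ring_scope.

Definition catw (S : Type) (p : seq S) (u : nat -> S) : nat -> S :=
  fun n => if (n < size p)%N then nth (u 0%N) p n else u (n - size p)%N.

Definition Fact (S : Type) (n : nat) (w : nat -> S) : set (seq S) :=
  [set x | exists i : nat, x = mkseq (fun k => w (i + k)%N) n].

(* v^{p/|v|}: the prefix of length p of v v v ... (for nonempty v). *)
Definition vpow (S : Type) (v : seq S) (p : nat) : seq S :=
  take p (flatten (nseq p v)).

(* E(u) = sup { r in Q : u = v^r for some nonempty v }, where u = v^r means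
   r|v| = p is a nonnegative integer and u = v^{p/|v|}. *)
Definition Eexp (R : realType) (S : eqType) (u : seq S) : \bar R :=
  ereal_sup [set ((ratr r : R)%:E) | r in
     [set r : rat | exists v : seq S, v != [::] /\
        exists p : nat, r * (size v)%:R = p%:R /\ u = vpow v p]].

Definition ACE (R : realType) (S : eqType) (w : nat -> S) : \bar R :=
  limn_esup (fun n => ereal_sup [set Eexp R x | x in Fact n w]).

Definition hmap (S G : Type) (f : S -> seq G) (x : seq S) : seq G :=
  flatten (map f x).

(* h(w) for an infinite word w; d is a dummy default letter, irrelevant when
   f is non-erasing (in particular when hmap f is injective). *)
Definition imgword (S G : Type) (d : G) (f : S -> seq G) (w : nat -> S) : nat -> G :=
  fun n => nth d (hmap f (mkseq w n.+1)) n.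

Definition ACE_I (R : realType) (S : Type) (G : eqType) (w : nat -> S) : \bar R :=
  ereal_sup [set ACE R (imgword fd.2 fd.1 w) | fd in
     [set fd : (S -> seq G) * G | injective (hmap fd.1)]].

From HB Require Import structures.
From mathcomp Require Import all_boot all_order all_algebra.
From mathcomp Require Import all_classical all_reals all_analysis.
From mathcomp Require Import zify.
Set Implicit Arguments. Unset Strict Implicit. Unset Printing Implicit Defensive.
Import Order.TTheory GRing.Theory Num.Theory.

(* An injective morphism h is non-erasing, so h(pu) = h(p) h(u): the image of
   w is the image of u preceded by a finite word.  It thus suffices that ACE is
   unchanged when the first letter of a word is deleted.  Deleting it only
   removes factors, so ACE cannot grow.  Conversely, the only new factors of
   length n+1 are the prefixes a y, and rotating a period of a y by one letter
   gives a period of y, whence E(a y) <= (n+1)/n * E(y); as (n+1)/n -> 1 the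
   limsup is unchanged. *)

Section Words.
Variable S : eqType.

Lemma size_flatten_nseq (v : seq S) p : size (flatten (nseq p v)) = p * size v.
Proof. by elim: p => //= p IH; rewrite size_cat IH mulSn. Qed.

Lemma nth_flatten_nseq d (v : seq S) p k : k < p * size v ->
  nth d (flatten (nseq p v)) k = nth d v (k %% size v).
Proof.
elim: p k => [|p IH] k //=; rewrite mulSn => hk.
rewrite nth_cat; case: ltnP => h; first by rewrite modn_small.
by rewrite IH ?ltn_subLR // -{2}(subnK h) modnDr.
Qed.

Lemma size_vpow (v : seq S) p : v != [::] -> size (vpow v p) = p.
Proof.
move=> v0; have le_p : p <= p * size v by rewrite leq_pmulr // lt0n size_eq0.
rewrite /vpow size_take size_flatten_nseq; case: ltnP => // h.
by apply/eqP; rewrite eqn_leq h le_p.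
Qed.

Lemma vpowE d (v : seq S) p : v != [::] ->
  vpow v p = mkseq (fun i => nth d v (i %% size v)) p.
Proof.
move=> v0; apply: (@eq_from_nth _ d) => [|i]; rewrite size_vpow ?size_mkseq // => ip.
have le_p : p <= p * size v by rewrite leq_pmulr // lt0n size_eq0.
by rewrite nth_mkseq // nth_take // nth_flatten_nseq // (leq_trans ip).
Qed.

Lemma vpow_size (x : seq S) : x != [::] -> vpow x (size x) = x.
Proof.
case: x => // a x _; rewrite (vpowE a) //.
apply: (@eq_from_nth _ a) => [|i]; rewrite size_mkseq // => hi.
by rewrite nth_mkseq // modn_small.
Qed.

Lemma mkseq_cons T (f : nat -> T) n : mkseq f n.+1 = f 0 :: mkseq (f \o succn) n.
Proof. by rewrite /mkseq /= -[1]addn0 iotaDl -map_comp. Qed.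

Lemma behead_vpow (v : seq S) p : v != [::] -> behead (vpow v p) = vpow (rot 1 v) p.-1.
Proof.
case: v => // a s _; rewrite rot1_cons !(vpowE a) -?size_eq0 ?size_rcons //.
case: p => // p; rewrite mkseq_cons /=; apply: eq_mkseq => i /=.
rewrite -addn1 -modnDml addn1.
have : i %% (size s).+1 < (size s).+1 by rewrite ltn_mod.
move: (i %% _) => j; rewrite ltnS leq_eqVlt => /orP[/eqP-> | js].
  by rewrite modnn nth_rcons ltnn eqxx.
by rewrite modn_small //= nth_rcons js.
Qed.

Lemma mkseq_catw (p : seq S) u k : mkseq (catw p u) (size p + k) = p ++ mkseq u k.
Proof.
apply: (@eq_from_nth _ (u 0)) => [|i]; first by rewrite size_cat !size_mkseq.
rewrite size_mkseq => hi; rewrite nth_mkseq // nth_cat /catw.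
by case: ltnP => // h; rewrite nth_mkseq // ltn_subLR.
Qed.

End Words.

Local Open Scope classical_set_scope.
Local Open Scope ring_scope.
Local Open Scope ereal_scope.

Section Exponent.
Variables (R : realType) (S : eqType).

Lemma Eexp_ge1 (x : seq S) : x != [::] -> 1 <= Eexp R x.
Proof.
move=> x0; apply: ereal_sup_ge; exists (ratr 1)%:E; last by rewrite rmorph1.
exists 1%R => //; exists x; split => //; exists (size x).
by rewrite mul1r vpow_size.
Qed.

Lemma Eexp_cons_le (a : S) y : y != [::] ->
  Eexp R (a :: y) <= ((size y).+1%:R / (size y)%:R)%:E * Eexp R y.
Proof.
move=> y0; apply: ge_ereal_sup => _ [r [v [v0 [p [rv ayv]]]] <-].
have hp : p = (size y).+1 by rewrite -[RHS]/(size (a :: y)) ayv size_vpow.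
rewrite {}hp in rv ayv.
have v_neq0 : ((size v)%:R : rat) != 0%R by rewrite pnatr_eq0 size_eq0.
have y_neq0 : ((size y)%:R : R) != 0%R by rewrite pnatr_eq0 size_eq0.
pose r' : rat := (size y)%:R / (size v)%:R.
have Ey : (ratr r')%:E <= Eexp R y.
  apply: ereal_sup_ubound; exists r' => //; exists (rot 1 v).
  split; first by rewrite -size_eq0 size_rot size_eq0.
  exists (size y); rewrite size_rot mulfVK //; split => //.
  by move/(congr1 behead): ayv; rewrite behead_vpow //= => <-.
have -> : ratr r = ((size y).+1%:R / (size y)%:R * ratr r' : R)%R.
  by rewrite /r' -(mulfK v_neq0 r) rv !fmorph_div !rmorph_nat mulrA divfK.
by rewrite EFinM lee_wpmul2l // lee_fin divr_ge0.
Qed.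

End Exponent.

Section Shift.
Variables (R : realType) (S : eqType).

Definition fact_exp (w : nat -> S) n := ereal_sup [set Eexp R x | x in Fact n w].

Lemma Fact_shift1 (w : nat -> S) n : Fact n (w \o succn) `<=` Fact n w.
Proof. by move=> x [i ->]; exists i.+1. Qed.

Lemma ACE_shift1_le (w : nat -> S) : ACE R (w \o succn) <= ACE R w.
Proof.
rewrite /ACE !limn_esup_lim; apply: lee_lim; try exact: is_cvg_esups.
apply: nearW => N; apply: ge_ereal_sup => _ [n /= Nn <-].
apply: (@le_trans _ _ (fact_exp w n)).
  by apply: le_ereal_sup; apply: image_subset; apply: Fact_shift1.
by apply: ereal_sup_ubound; exists n.
Qed.

Lemma fact_exp_succ_le (w : nat -> S) n (c : R) (B : \bar R) : (0 < n)%N ->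
  (n.+1%:R <= c * n%:R)%R -> fact_exp (w \o succn) n <= B ->
  fact_exp (w \o succn) n.+1 <= B -> fact_exp w n.+1 <= c%:E * B.
Proof.
move=> n_gt0 le_c le_n le_n1; have n_gt0' : (0 < n%:R :> R)%R by rewrite ltr0n.
have ratio_le_c : (n.+1%:R / n%:R <= c)%R by rewrite ler_pdivrMr.
have c_ge1 : 1 <= c%:E.
  by rewrite lee_fin -(ler_pM2r n_gt0') mul1r (le_trans _ le_c) // ler_nat.
apply: ge_ereal_sup => _ [_ [[|i] ->] <-].
  set y := mkseq (fun k => w k.+1) n.
  have y0 : y != [::] by rewrite -size_eq0 size_mkseq -lt0n.
  have Ey : Eexp R y <= B.
    by apply: le_trans le_n; apply: ereal_sup_ubound; exists y => //; exists 0%N.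
  have -> : mkseq (fun k => w (0 + k)%N) n.+1 = w 0%N :: y by exact: mkseq_cons.
  apply: le_trans (Eexp_cons_le R _ y0) _; rewrite size_mkseq.
  by apply: lee_pmul; rewrite ?lee_fin ?divr_ge0 // (le_trans lee01 (Eexp_ge1 R y0)).
set x := mkseq (fun k => w (i.+1 + k)%N) n.+1.
have x0 : x != [::] by rewrite -size_eq0 size_mkseq.
have Ex : Eexp R x <= B.
  by apply: le_trans le_n1; apply: ereal_sup_ubound; exists x => //; exists i.
apply: le_trans (lee_pemull _ c_ge1) => //.
exact: le_trans lee01 (le_trans (Eexp_ge1 R x0) Ex).
Qed.

Lemma esups_fact_exp_le (w : nat -> S) N :
  esups (fact_exp w) N.+2 <= (1 + harmonic N)%:E * esups (fact_exp (w \o succn)) N.+1.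
Proof.
apply: ge_ereal_sup => _ [[|n] /= Nn <-] //; apply: fact_exp_succ_le; first by lia.
- rewrite /harmonic /= mulrDl mul1r -addn1 natrD lerD2l mulrC.
  by rewrite ler_pdivlMr ?ltr0n // mul1r ler_nat.
- by apply: ereal_sup_ubound; exists n.
- by apply: ereal_sup_ubound; exists n.+1 => //=; lia.
Qed.

Lemma ACE_shift1_ge (w : nat -> S) : ACE R w <= ACE R (w \o succn).
Proof.
change (limn_esup (fact_exp w) <= limn_esup (fact_exp (w \o succn))).
rewrite !limn_esup_lim (cvg_lim _ (@cvg_esups_inf _ (fact_exp w))) //.
set B := esups (fact_exp (w \o succn)).
have B_cvg : (fun N => (1 + harmonic N)%:E * B N.+1) @ \oo --> 1%:E * limn B.
  apply: cvgeM.
  - have [Bfin | Binf] := boolP (limn B \is a fin_num).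
      exact: mule_def_fin.
    exact: mule_def_neq0_infty.
  - have -> : (fun N => (1 + @harmonic R N)%:E) = (fun N => 1 + (@harmonic R N)%:E).
      by apply: boolp.funext => N; rewrite EFinD.
    rewrite -[X in _ --> X]adde0.
    by apply: cvgeD => //; [exact: cvg_cst | exact: cvge_harmonic].
  - by rewrite (cvg_shiftS B); exact: is_cvg_esups.
rewrite -[X in _ <= X]mul1e; apply: (cvge_ge _ B_cvg); apply: nearW => N.
apply: le_trans (esups_fact_exp_le w N).
by apply: ereal_inf_lbound; exists N.+2.
Qed.

Lemma ACE_shift1 (w : nat -> S) : ACE R (w \o succn) = ACE R w.
Proof. by apply/eqP; rewrite eq_le ACE_shift1_le ACE_shift1_ge. Qed.

Lemma ACE_shift (w : nat -> S) K : ACE R (fun k => w (k + K)%N) = ACE R w.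
Proof.
elim: K => [|K IH]; first by congr (ACE R _); apply: boolp.funext => k; rewrite addn0.
rewrite -IH -(ACE_shift1 (fun k => w (k + K)%N)).
by congr (ACE R _); apply: boolp.funext => k /=; rewrite addnS addSn.
Qed.

Lemma ACE_catw (q : seq S) (v : nat -> S) : ACE R (catw q v) = ACE R v.
Proof.
rewrite -(ACE_shift _ (size q)); congr (ACE R _); apply: boolp.funext => k.
by rewrite /catw ltnNge leq_addl /= addnK.
Qed.

End Shift.

Section Morphism.
Variables (S : eqType) (G : Type) (f : S -> seq G).

Lemma hmap_cat s t : hmap f (s ++ t) = hmap f s ++ hmap f t.
Proof. by rewrite /hmap map_cat flatten_cat. Qed.

Lemma inj_hmap_nonerasing : injective (hmap f) -> forall a, (0 < size (f a))%N.
Proof.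
move=> f_inj a; case fa: (f a) => [|//].
by have /f_inj : hmap f [:: a] = hmap f [::] by rewrite /hmap /= fa.
Qed.

Hypothesis f_nonerasing : forall a, (0 < size (f a))%N.

Lemma size_hmap_ge x : (size x <= size (hmap f x))%N.
Proof.
elim: x => //= a x IH; rewrite -cat1s hmap_cat size_cat.
have : (1 <= size (hmap f [:: a]))%N by rewrite /hmap /= cats0 f_nonerasing.
lia.
Qed.

Lemma nth_hmap_mkseq (d : G) (w : nat -> S) n m : (n < m)%N ->
  nth d (hmap f (mkseq w m)) n = imgword d f w n.
Proof.
move=> lt_nm; rewrite /imgword -(subnKC lt_nm) /mkseq iotaD map_cat hmap_cat nth_cat.
by have := size_hmap_ge (map w (iota 0 n.+1)); rewrite size_map size_iota => ->.
Qed.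

Lemma imgword_catw (d : G) (p : seq S) (u : nat -> S) :
  imgword d f (catw p u) = catw (hmap f p) (imgword d f u).
Proof.
apply: boolp.funext => n.
rewrite -(@nth_hmap_mkseq d _ n (size p + n.+1)); last by lia.
rewrite mkseq_catw hmap_cat nth_cat /catw.
case: ltnP => [lt_n | le_n]; first exact: set_nth_default.
by rewrite nth_hmap_mkseq //; lia.
Qed.

End Morphism.

Theorem theorem20 (R : realType) (Sigma Gamma : finType) :
  (2 <= #|Sigma|)%N -> (2 <= #|Gamma|)%N ->
  forall (w u : nat -> Sigma) (p : seq Sigma),
    w = catw p u ->
    ACE_I R Gamma w = ACE_I R Gamma u.
Proof.
move=> _ _ w u p ->; congr ereal_sup; apply: eq_imagel => -[f d] /= f_inj.
by rewrite imgword_catw ?ACE_catw //; exact: inj_hmap_nonerasing.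
Qed.
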